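(* Let $A$ be a setoid and $B$ a setoid family over $A$. The function term $\mathsf s:P_B\,W\to W$, sending $(a,f)$ to the extensional tree $\mathsf{sup}\,a\,f_0$, is extensional: if $(a,f)\approx_{P_BW}(a',f')$ then $\mathsf s(a,f)\approx_W\mathsf s(a',f')$.
   Context: Setting: intensional Martin-Löf type theory with $\Pi$-types, record types and a universe $\mathsf U$ closed under $\Pi$ and containing intensional $\Sigma$-types, identity types, unit type, W-types and dependent W-types; propositions-as-types. For a W-type $\mathsf W(A_0,B_0)$ with constructor $\mathsf{sup}$, $\mathsf n$, $\mathsf b$ are node and branch functions. $\mathsf{DW}_{I,X,Y,d}:I\to\mathsf U$ denotes the dependent W-type (inductive family with constructor $\mathsf{dsup}\,i\,x\,f:\mathsf{DW}\,i$ for $x:X\,i$, $f:\prod_{y:Y\,i\,x}\mathsf{DW}(d\,i\,x\,y)$). A setoid $X$: type $X_0:\mathsf U$ with relation $\approx_X$ and proofs of reflexivity, symmetry, transitivity. Extensional function $f:X\Rightarrow Y$: $f_0:X_0\to Y_0$ with a proof that it preserves $\approx$; $X\Rightarrow Y$ is a setoid with pointwise equality; $\circ$ is composition. A setoid family $B$ over setoid $A$: setoids $B\,a$ (underlying type $B_0a$) and transports $B_\alpha:B\,a\Rightarrow B\,a'$ for $\alpha:a\approx_Aa'$, functorial up to $\approx$, with $B_\alpha\approx B_{\alpha'}$ for all $\alpha,\alpha'$. Write $b\approx_\alpha b'$ for $B_\alpha b\approx b'$. $P_BX$ is the setoid with underlying type $\sum_{a:A}(B\,a\Rightarrow X)$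 and $(a,k)\approx(a',k'):=\sum_{\alpha:a\approx a'}k\approx k'\circ B_\alpha$. $W$: with $\mathsf W:=\mathsf W(A_0,B_0)$, $\approx^Bw\,w':=\mathsf{DW}_{I,X,Y,d}(w,w')$ with $I:=\mathsf W\times\mathsf W$, $X(w,w'):=\mathsf nw\approx_A\mathsf nw'$, $Y(w,w')\alpha:=\sum_{b,b'}b\approx_\alpha b'$, $d(w,w')\alpha(b,b',\beta):=(\mathsf bwb,\mathsf bw'b')$. $W$ is the setoid with underlying type $\sum_{w:\mathsf W}\approx^Bw\,w$ and $(w,\_)\approx_W(w',\_):=\approx^Bw\,w'$. For $a:A$ and $f:B\,a\Rightarrow W$, $f_0:B_0a\to\mathsf W$ is the underlying function of $f$ followed by first projection; the tree $\mathsf{sup}\,a\,f_0$ is extensional (because $f$ is), giving $\mathsf s(a,f):W$. *)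

Record setoid := Setoid {
  car :> Type;
  eqv : car -> car -> Type;
  eqv_refl : forall x, eqv x x;
  eqv_sym : forall x y, eqv x y -> eqv y x;
  eqv_trans : forall x y z, eqv x y -> eqv y z -> eqv x z }.
Arguments eqv {s} x y.
Arguments eqv_refl {s} x.
Arguments eqv_sym {s x y} _.
Arguments eqv_trans {s x y z} _ _.
Notation "x ≈ y" := (eqv x y) (at level 70, no associativity).

Record extfun (X Y : setoid) := ExtFun {
  ap :> X -> Y;
  ap_ext : forall x x' : X, x ≈ x' -> ap x ≈ ap x' }.
Arguments ap {X Y} _ _.
Arguments ap_ext {X Y} e {x x'} _.

Definition extfun_setoid (X Y : setoid) : setoid.
Proof.
  refine (@Setoid (extfun X Y) (fun f g => forall x : X, f x ≈ g x) _ _ _).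
  - intros f x; apply eqv_refl.
  - intros f g H x; apply eqv_sym, H.
  - intros f g h H1 H2 x; exact (eqv_trans (H1 x) (H2 x)).
Defined.
Notation "X ⇒ Y" := (extfun_setoid X Y) (at level 99, right associativity).

Definition comp {X Y Z : setoid} (g : extfun Y Z) (f : extfun X Y) : extfun X Z :=
  ExtFun X Z (fun x => g (f x)) (fun x x' e => ap_ext g (ap_ext f e)).

Record setoid_family (A : setoid) := SetoidFamily {
  fam :> A -> setoid;
  tr : forall a a' : A, a ≈ a' -> extfun (fam a) (fam a');
  tr_refl : forall (a : A) (b : fam a), tr a a (eqv_refl a) b ≈ b;
  tr_trans : forall (a a' a'' : A) (al : a ≈ a') (be : a' ≈ a'') (b : fam a),
      tr a a'' (eqv_trans al be) b ≈ tr a' a'' be (tr a a' al b);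
  tr_irr : forall (a a' : A) (al al' : a ≈ a') (b : fam a),
      tr a a' al b ≈ tr a a' al' b }.
Arguments fam {A} _ _.
Arguments tr {A} s {a a'} _.
Arguments tr_refl {A} s {a} b.
Arguments tr_trans {A} s {a a' a''} al be b.
Arguments tr_irr {A} s {a a'} al al' b.

Definition eqv_over {A : setoid} (B : setoid_family A) {a a' : A} (al : a ≈ a')
  (b : B a) (b' : B a') : Type := tr B al b ≈ b'.

Definition PB {A : setoid} (B : setoid_family A) (X : setoid) : setoid.
Proof.
  refine (@Setoid {a : A & extfun (B a) X}
     (fun p q => {al : projT1 p ≈ projT1 q &
         @eqv (B (projT1 p) ⇒ X) (projT2 p) (comp (projT2 q) (tr B al))}) _ _ _).
  - intros [a k]; exists (eqv_refl a); intros b; simpl.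
    apply ap_ext, eqv_sym, tr_refl.
  - intros [a k] [a' k'] [al H]; simpl in *. exists (eqv_sym al); intros b; simpl.
    refine (eqv_trans _ (eqv_sym (H _))); simpl.
    apply ap_ext, eqv_sym.
    refine (eqv_trans (eqv_sym (tr_trans B (eqv_sym al) al b)) _).
    refine (eqv_trans (tr_irr B _ (eqv_refl a') b) _).
    apply tr_refl.
  - intros [a k] [a' k'] [a'' k''] [al H1] [be H2]; simpl in *.
    exists (eqv_trans al be); intros b; simpl.
    refine (eqv_trans (H1 b) _); simpl.
    refine (eqv_trans (H2 _) _); simpl.
    apply ap_ext, eqv_sym, tr_trans.
Defined.

Inductive Wt (A0 : Type) (B0 : A0 -> Type) : Type :=
  sup : forall a : A0, (B0 a -> Wt A0 B0) -> Wt A0 B0.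
Arguments sup {A0 B0} a f.

Definition node {A0 B0} (w : Wt A0 B0) : A0 := match w with sup a _ => a end.
Definition br {A0 B0} (w : Wt A0 B0) : B0 (node w) -> Wt A0 B0 :=
  match w with sup _ f => f end.

Inductive DW (I : Type) (X : I -> Type) (Y : forall i, X i -> Type)
    (d : forall i (x : X i), Y i x -> I) : I -> Type :=
  dsup : forall (i : I) (x : X i), (forall y : Y i x, DW I X Y d (d i x y)) -> DW I X Y d i.
Arguments dsup {I X Y d} i x f.

Section WSetoid.
Variables (A : setoid) (B : setoid_family A).

Definition WW := Wt A (fun a => B a).

Definition bX (p : WW * WW) : Type := node (fst p) ≈ node (snd p).
Definition bY (p : WW * WW) (al : bX p) : Type :=
  {b : B (node (fst p)) & {b' : B (node (snd p)) & eqv_over B al b b'}}.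
Definition bd (p : WW * WW) (al : bX p) (y : bY p al) : WW * WW :=
  (br (fst p) (projT1 y), br (snd p) (projT1 (projT2 y))).

Definition bisim (w w' : WW) : Type := DW (WW * WW) bX bY bd (w, w').

Lemma bisim_sym (w w' : WW) : bisim w w' -> bisim w' w.
Proof.
  unfold bisim. intros H.
  change (DW _ bX bY bd (snd (w, w'), fst (w, w'))).
  induction H as [p al h IH].
  apply (dsup (snd p, fst p) (eqv_sym al)).
  intros [b' [b be]]; unfold eqv_over in be; simpl in *.
  assert (ga : eqv_over B al b b').
  { unfold eqv_over.
    refine (eqv_trans (eqv_sym (ap_ext (tr B al) be)) _).
    refine (eqv_trans (eqv_sym (tr_trans B (eqv_sym al) al b')) _).
    refine (eqv_trans (tr_irr B _ (eqv_refl _) b') _).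
    apply tr_refl. }
  exact (IH (existT _ b (existT _ b' ga))).
Defined.

Lemma bisim_trans_gen (p : WW * WW) : DW _ bX bY bd p ->
  forall q, DW _ bX bY bd q -> fst q = snd p -> DW _ bX bY bd (fst p, snd q).
Proof.
  intros H1.
  induction H1 as [p al h IH].
  intros q H2. destruct H2 as [q be k].
  destruct p as [p1 p2], q as [q1 q2]; simpl in *. intros e; subst q1.
  apply (dsup (p1, q2) (eqv_trans al be)).
  intros [b1 [b3 ga]]; unfold eqv_over in ga; simpl in *.
  pose (b2 := tr B al b1).
  assert (de : eqv_over B be b2 b3).
  { unfold eqv_over. exact (eqv_trans (eqv_sym (tr_trans B al be b1)) ga). }
    exact (IH (existT (fun b => {b' : B (node p2) & eqv_over B al b b'}) b1
               (existT (fun b' => eqv_over B al b1 b') b2 (eqv_refl b2)))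
            (br p2 b2, br q2 b3) (k (existT _ b2 (existT _ b3 de))) eq_refl).
Defined.

Lemma bisim_trans (w1 w2 w3 : WW) : bisim w1 w2 -> bisim w2 w3 -> bisim w1 w3.
Proof.
  intros H1 H2. exact (bisim_trans_gen (w1, w2) H1 (w2, w3) H2 eq_refl).
Defined.

Definition Wsetoid : setoid.
Proof.
  refine (@Setoid {w : WW & bisim w w}
            (fun x y => bisim (projT1 x) (projT1 y)) _ _ _).
  - intros [w e]; exact e.
  - intros x y; apply bisim_sym.
  - intros x y z; apply bisim_trans.
Defined.

Definition s_fun (p : PB B Wsetoid) : Wsetoid.
Proof.
  destruct p as [a f].
  exists (sup a (fun b => projT1 (f b))).
  unfold bisim.
  apply (dsup (sup a (fun b => projT1 (f b)), sup a (fun b => projT1 (f b)))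
              (eqv_refl a)).
  intros [b [b' be]]; unfold eqv_over in be; simpl in *.
  exact (ap_ext f (eqv_trans (eqv_sym (tr_refl B b)) be)).
Defined.

End WSetoid.
Arguments Wsetoid {A} B.
Arguments s_fun {A B} p.


Lemma bisim_sup {A : setoid} {B : setoid_family A} (a a' : A) (al : a ≈ a')
    (k : B a -> WW A B) (k' : B a' -> WW A B) :
  (forall b b', eqv_over B al b b' -> bisim A B (k b) (k' b')) ->
  bisim A B (sup a k) (sup a' k').
Proof.
  intros Hk.
  apply (dsup (sup a k, sup a' k') al).
  intros [b [b' be]].
  exact (Hk b b' be).
Defined.

Theorem lemma3p5 (A : setoid) (B : setoid_family A) (p p' : PB B (Wsetoid B)) :
  p ≈ p' -> s_fun p ≈ s_fun p'.
Proof.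
  destruct p as [a f], p' as [a' f'].
  intros [al Hf].
  apply (bisim_sup a a' al).
  intros b b' be.
  (* [Hf b] relates [f b] to [f' (B_al b)]; extensionality of [f'] then reaches [f' b']. *)
  exact (eqv_trans (Hf b) (ap_ext f' be)).
Qed.
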